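(* Let $d\ge 3$ be an odd integer, let $\omega=e^{2\pi i/d}$, $\tau=-e^{\pi i/d}$, and let $X,Z$ be the operators on $\mathbb{C}^d$ (basis $\{|r\rangle : r\in\mathbb{Z}/d\mathbb{Z}\}$) given by $Z|r\rangle=\omega^r|r\rangle$, $X|r\rangle=|r+1\rangle$, with displacement operators $D_{j,k}=\tau^{jk}X^jZ^k$. Let $x_0=-2-\sqrt{d+1}$ (with $\sqrt{d+1}>0$), let $\sqrt{x_0}$ be a purely imaginary square root of $x_0$, and let $|\Psi\rangle=N(\sqrt{x_0},v_1,\dots,v_{d-1})^{\mathrm T}$, where $|v_j|=1$ and $v_{-j}=-v_j^*$ for all $j\neq 0$ (indices mod $d$), and $N^2=1/(d-1-x_0)$. Denote by $\psi_r$ the components of $|\Psi\rangle$. Then for every $j\not\equiv 0 \pmod d$, $$\sqrt{d+1}\,\langle\Psi|X^{-2j}|\Psi\rangle=\frac{\psi_j^2}{|\psi_j|^2}\quad\Longleftrightarrow\quad \sum_{k=1}^{d-1}\langle\Psi|D_{-2j,k}|\Psi\rangle=-\sqrt{d+1}\,\langle\Psi|X^{-2j}|\Psi\rangle .$$ Consequently, the first identity holds for all $j\not\equiv0$ if and only if $\sum_{k=1}^{d-1}\langle\Psi|D_{j,k}|\Psi\rangle=-\sqrt{d+1}\,\langle\Psi|X^{j}|\Psi\rangle$ holds for all $j\not\equiv 0$.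
   Context: Indices of vector components and of $D_{j,k}$ are taken modulo $d$; $^*$ denotes complex conjugation. The identity $\sqrt{d+1}\langle\Psi|X^{-2j}|\Psi\rangle=\psi_j^2/|\psi_j|^2$ is called the $X$-overlap equation. *)

From HB Require Import structures.
From mathcomp Require Import all_boot all_order all_algebra.
Set Implicit Arguments. Unset Strict Implicit. Unset Printing Implicit Defensive.
Import Order.TTheory GRing.Theory Num.Theory.
Local Open Scope ring_scope.

Section Defs.
Variables (C : numClosedFieldType) (d : nat).

(* d.-root (-1) is the d-th root of -1 of minimal non-negative argument, i.e. e^{pi i/d} *)
Definition tau : C := - d.-root (-1).
Definition omega : C := (d.-root (-1 : C)) ^+ 2.

Definition Xpow (j : int) : 'M[C]_d :=
  \matrix_(r < d, s < d) ((r%:Z == s%:Z + j %[mod d%:Z])%Z)%:R.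
Definition Zpow (k : int) : 'M[C]_d :=
  \matrix_(r < d, s < d) ((r == s)%:R * omega ^ (k * s%:Z)).
Definition Dop (j k : int) : 'M[C]_d := tau ^ (j * k) *: (Xpow j *m Zpow k).

Definition expect (psi : nat -> C) (A : 'M[C]_d) : C :=
  \sum_(r < d) \sum_(s < d) (psi r)^* * A r s * psi s.

Definition Psi (N sx0 : C) (v : nat -> C) (r : nat) : C :=
  if (r %% d == 0)%N then N * sx0 else N * v (r %% d)%N.

Definition compZ (psi : nat -> C) (j : int) : C := psi `|(j %% d%:Z)%Z|%N.

End Defs.

From HB Require Import structures.
From mathcomp Require Import all_boot all_order all_algebra.
From mathcomp Require Import ring zify.
Set Implicit Arguments. Unset Strict Implicit. Unset Printing Implicit Defensive.
Import Order.TTheory GRing.Theory Num.Theory.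
Local Open Scope ring_scope.

(* Since tau = omega^((d+1)/2), the phases of D_{m,k} = tau^{mk} X^m Z^k are
   powers of omega^(s - j) on |s>, where 2j = -m (mod d); as omega is a
   primitive d-th root of unity, summing over k gives
   sum_{k=1}^{d-1} D_{m,k} = X^m (d |j><j| - 1), hence
   sum_k <Psi|D_{m,k}|Psi> = d psi_{-j}^* psi_j - <Psi|X^m|Psi>.
   With psi_{+-j} = N v_j, -N v_j^*, both identities become linear equations
   for <Psi|X^m|Psi> in terms of v_j^2, and they coincide because
   sqrt(d+1)^2 = d+1 and N^2 = 1/(d+1+sqrt(d+1)).  Only psi_{+-j} with
   j <> 0 (mod d) ever enter. *)

Lemma prim_exprz_eq1 (R : unitRingType) n (z : R) (k : int) :
  n.-primitive_root z -> (z ^ k == 1) = (n%:Z %| k)%Z.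
Proof.
move=> prim_z; rewrite dvdzE /= (prim_order_dvd prim_z).
case: k => m; first by rewrite -exprnP.
by rewrite NegzE -invr_expz invr_eq1 -exprnP.
Qed.

Lemma sum_expr_unity_root (R : idomainType) n (y : R) : (0 < n)%N -> y ^+ n = 1 ->
  \sum_(1 <= k < n) y ^+ k = (y == 1)%:R * n%:R - 1.
Proof.
move=> n_gt0 yn1; have [->|y_neq1] := eqVneq y 1.
  rewrite (eq_bigr (fun _ => 1)) => [|k _]; last exact: expr1n.
  by rewrite sumr_const_nat mul1r natrB.
have : \sum_(k < n) y ^+ k = 0.
  apply/eqP; move: (subrX1 y n); rewrite yn1 subrr => /esym/eqP.
  by rewrite mulf_eq0 subr_eq0 (negbTE y_neq1).
rewrite -(big_mkord xpredT) big_ltn // expr0 mul0r sub0r => /eqP.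
by rewrite addrC addr_eq0 => /eqP.
Qed.

Section RootOfMinusOne.
Variable C : numClosedFieldType.

Lemma norm_eq1_expr (x : C) n : (0 < n)%N -> `|x ^+ n| = 1 -> `|x| = 1.
Proof. by move=> n_gt0; rewrite normrX => /eqP; rewrite pexpr_eq1 // => /eqP. Qed.

Lemma norm1_mulBconj (x z : C) : `|x| = 1 -> `|z| = 1 ->
  (x - z) * (x - z^*) = 2 * x * ('Re x - 'Re z).
Proof.
move=> x1 z1; rewrite !ReE; apply/eqP; rewrite -subr_eq0; apply/eqP.
transitivity (z * z^* - x * x^*); first by field.
by rewrite -!normCK x1 z1 subrr.
Qed.

Lemma exists_unity_root_neq1 q : (1 < q)%N -> exists2 w : C, w ^+ q = 1 & w != 1.
Proof.
move=> q_gt1; have [w /rootP] : exists w, root (\poly_(i < q) (1 : C)) w.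
  by apply/closed_rootP; rewrite size_poly_eq ?oner_eq0 // -(subnKC q_gt1).
rewrite horner_poly (eq_bigr _ (fun _ _ => mul1r _)) => sum_w0.
exists w; first by apply/eqP; rewrite -subr_eq0 subrX1 sum_w0 mulr0.
apply: contra_eqN sum_w0 => /eqP ->; rewrite (eq_bigr _ (fun _ _ => expr1n _ _)).
by rewrite sumr_const card_ord pnatr_eq0 -lt0n ltnW.
Qed.

Lemma Re_le_rootCN1 n (z : C) : (0 < n)%N -> z ^+ n = -1 ->
  'Re z <= 'Re (n.-root (-1)).
Proof.
move=> n_gt0 zn; case/real_ge0P: (Creal_Im z) => [|/ltW Im_le0].
  exact: rootC_Re_max.
rewrite -Re_conj; apply: rootC_Re_max => //; last by rewrite Im_conj oppr_ge0.
by rewrite -rmorphXn zn rmorphN1.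
Qed.

Lemma XnsubC_factor e (u : C) : (0 < e)%N ->
  exists2 r : seq C, size r = e & forall x, \prod_(z <- r) (x - z) = x ^+ e - u.
Proof.
move=> e_gt0; have [r def_p] := closed_field_poly_normal ('X^e - u%:P : {poly C}).
rewrite (monicP (monicXnsubC _ e_gt0)) scale1r in def_p.
exists r; first by have := size_prod_XsubC r id; rewrite -def_p size_XnsubC // => -[].
move=> x; have := congr1 (horner^~ x) def_p; rewrite /= horner_prod !hornerE => ->.
by apply: eq_bigr => z _; rewrite hornerXsubC.
Qed.

(* If rho^e = -1, the e-th roots z of -w, for a (d/e)-th root of unity w != 1,
   are d-th roots of -1, so Re z <= Re rho by the choice of rho = d.-root (-1).
   Then prod_z (rho - z)(rho - z^* ) = 2^e rho^e prod_z (Re rho - Re z) <= 0,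
   whereas it equals (rho^e + w)(rho^e + w^* ) = |w - 1|^2 > 0. *)
Lemma rootCN1_expr_neqN1 d e : odd d -> (e %| d)%N -> (e < d)%N ->
  d.-root (-1 : C) ^+ e != -1.
Proof.
move=> d_odd e_dvd_d e_lt_d; apply/eqP => rho_e.
set rho := d.-root (-1 : C) in rho_e.
have d_gt0 := odd_gt0 d_odd; have e_gt0 := dvdn_gt0 d_gt0 e_dvd_d.
have rho1 : `|rho| = 1 by apply: (norm_eq1_expr d_gt0); rewrite rootCK // normrN1.
have [q def_d] := dvdnP e_dvd_d.
have q_gt1 : (1 < q)%N by rewrite -(ltn_pmul2r e_gt0) mul1n -def_d.
have q_odd : odd q by move: d_odd; rewrite def_d oddM => /andP[].
have [w wq w_neq1] := exists_unity_root_neq1 q_gt1.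
have [r size_r prod_r] := XnsubC_factor (- w) e_gt0.
have root_r z : z \in r -> z ^+ e = - w.
  move=> zr; apply/eqP; rewrite -subr_eq0 -prod_r.
  by rewrite (big_rem z zr) /= subrr mul0r.
have Re_r z : z \in r -> 0 <= 'Re rho - 'Re z.
  move=> zr; rewrite subr_ge0 Re_le_rootCN1 //.
  by rewrite def_d mulnC exprM root_r // exprNn wq mulr1 -signr_odd q_odd.
have norm_r z : z \in r -> `|z| = 1.
  move=> zr; apply: (norm_eq1_expr e_gt0); rewrite root_r // normrN.
  by apply: (norm_eq1_expr (ltnW q_gt1)); rewrite wq normr1.
have prod_conj : \prod_(z <- r) (rho - z^*) = rho ^+ e + w^*.
  have := congr1 Num.conj (prod_r rho^*).
  rewrite rmorph_prod rmorphB rmorphN rmorphXn /= conjCK opprK => <-.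
  by apply: eq_bigr => z _; rewrite rmorphB /= conjCK.
have : \prod_(z <- r) ((rho - z) * (rho - z^*)) = `|w - 1| ^+ 2.
  rewrite big_split /= prod_r prod_conj rho_e opprK normCK rmorphB rmorph1.
  by rewrite addrC [_ + w^*]addrC.
rewrite (eq_big_seq (fun z => 2 * rho * ('Re rho - 'Re z))); last first.
  by move=> z zr; rewrite norm1_mulBconj // norm_r.
rewrite big_split /= [X in X * _](big_nth 0) prodr_const_nat subn0 size_r.
rewrite exprMn rho_e mulrN1 => eq_w.
have prod_ge0 : 0 <= 2 ^+ e * \prod_(z <- r) ('Re rho - 'Re z).
  by rewrite mulr_ge0 ?exprn_ge0 ?ler0n // big_seq prodr_ge0.
have : 0 < `|w - 1| ^+ 2 by rewrite exprn_gt0 // normr_gt0 subr_eq0.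
by rewrite -eq_w mulNr oppr_gt0 (le_gtF prod_ge0).
Qed.

Lemma omega_expr_order d : (0 < d)%N -> omega C d ^+ d = 1.
Proof. by move=> d_gt0; rewrite /omega -exprM mulnC exprM rootCK // sqrrN expr1n. Qed.

Lemma omega_prim d : odd d -> d.-primitive_root (omega C d).
Proof.
move=> d_odd; have d_gt0 := odd_gt0 d_odd.
have [m prim_m m_dvd_d] := prim_order_exists d_gt0 (omega_expr_order d_gt0).
have [m_eq_d|m_neq_d] := eqVneq m d; first by rewrite m_eq_d in prim_m.
have m_lt_d : (m < d)%N by rewrite ltn_neqAle m_neq_d dvdn_leq.
move: (prim_expr_order prim_m) => /eqP; rewrite /omega -exprM mulnC exprM sqrf_eq1.
case/orP=> /eqP rho_m; last by have/eqP := rootCN1_expr_neqN1 d_odd m_dvd_d m_lt_d.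
have := rootCK d_gt0 (-1 : C).
rewrite -[in X in _ ^+ X](divnK m_dvd_d) mulnC exprM rho_m expr1n.
by move/eqP; rewrite -addr_eq0 -(natrD C 1 1) pnatr_eq0.
Qed.

End RootOfMinusOne.

Section Displacement.
Variables (C : numClosedFieldType) (d : nat).
Hypothesis d_odd : odd d.

Local Notation w := (omega C d).
Local Notation modd j := `|(j %% d%:Z)%Z|%N.

Let d_gt0 : (0 < d)%N := odd_gt0 d_odd.
Let d_neq0 : d%:Z != 0. Proof. by rewrite eqz_nat -lt0n d_gt0. Qed.

Lemma modz_absz j : (j %% d%:Z)%Z = (modd j)%:Z.
Proof. by rewrite gez0_abs // modz_ge0. Qed.

Lemma modd_lt j : (modd j < d)%N.
Proof. by rewrite -ltz_nat -modz_absz ltz_mod. Qed.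

Lemma eqz_mod_small (s : nat) j : (s < d)%N ->
  (s%:Z == j %[mod d%:Z])%Z = (s == modd j).
Proof. by move=> s_lt_d; rewrite modz_small ?ltz_nat ?andbT // modz_absz eqz_nat. Qed.

Lemma sum_eqz_mod (F : 'I_d -> C) j :
  \sum_(s < d) ((s%:Z == j %[mod d%:Z])%Z)%:R * F s = F (Ordinal (modd_lt j)).
Proof.
rewrite (bigD1 (Ordinal (modd_lt j))) //= eqz_mod_small ?modd_lt // eqxx mul1r.
rewrite big1 ?addr0 // => s s_neq.
by rewrite eqz_mod_small // (negbTE (s_neq : (s : nat) != modd j)) mul0r.
Qed.

Lemma dvdz_double x : (d%:Z %| 2 * x)%Z = (d%:Z %| x)%Z.
Proof. by rewrite Gauss_dvdzr // coprimezE coprimen2. Qed.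

Lemma dvdz_add_double m j : (d%:Z %| m + 2 * j)%Z -> (d%:Z %| m)%Z = (d%:Z %| j)%Z.
Proof.
move=> dvd_m2j; rewrite -dvdz_double -(rpredBr _ dvd_m2j).
by rewrite opprD addrA subrr add0r rpredN.
Qed.

Lemma double_uphalfz : 2 * (uphalf d)%:Z = d%:Z + 1.
Proof. by have := odd_uphalfK d_odd; lia. Qed.

Lemma dvdz_uphalf_add m j s : (d%:Z %| m + 2 * j)%Z ->
  (d%:Z %| (uphalf d)%:Z * m + s)%Z = (s == j %[mod d%:Z])%Z.
Proof.
move=> dvd_m2j; rewrite eqz_mod_dvd -dvdz_double.
have -> : 2 * ((uphalf d)%:Z * m + s) = d%:Z * m + (m + 2 * j) + 2 * (s - j).
  by rewrite mulrDr mulrA double_uphalfz; ring.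
by rewrite rpredDl ?dvdz_double // rpredD // dvdz_mulr.
Qed.

Lemma tau_omega : tau C d = w ^+ uphalf d.
Proof. by rewrite /tau /omega -exprM mul2n odd_uphalfK // exprS rootCK // mulrN1. Qed.

Lemma sum_tau_omega m j (s : nat) : (d%:Z %| m + 2 * j)%Z ->
  \sum_(1 <= k < d) tau C d ^ (m * k%:Z) * w ^ (k%:Z * s%:Z)
    = ((s%:Z == j %[mod d%:Z])%Z)%:R * d%:R - 1.
Proof.
move=> dvd_m2j; set y := w ^ ((uphalf d)%:Z * m + s%:Z).
have w_unit : w \is a GRing.unit.
  by rewrite -(unitrX_pos _ d_gt0) omega_expr_order // unitr1.
have term k : tau C d ^ (m * k%:Z) * w ^ (k%:Z * s%:Z) = y ^+ k.
  rewrite tau_omega !exprnP !exprz_exp -exprzDr //.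
  by congr (w ^ _); ring.
rewrite (eq_bigr _ (fun k _ => term k)) sum_expr_unity_root //.
  by rewrite (prim_exprz_eq1 _ (omega_prim C d_odd)) (dvdz_uphalf_add _ dvd_m2j).
by rewrite exprnP exprz_exp mulrC -exprz_exp -exprnP omega_expr_order // exp1rz.
Qed.

Lemma Dop_entry m k (r s : 'I_d) :
  Dop C d m k r s = tau C d ^ (m * k) * (Xpow C d m r s * w ^ (k * s%:Z)).
Proof.
rewrite /Dop [in LHS]mxE [in LHS]mxE (bigD1 s) //= big1 => [|l l_neq_s].
  by rewrite addr0 [Zpow _ _ _ _ _]mxE eqxx mul1r.
by rewrite [Zpow _ _ _ _ _]mxE (negbTE l_neq_s) mul0r mulr0.
Qed.

Lemma Xpow_eqmod m1 m2 : (m1 == m2 %[mod d%:Z])%Z -> Xpow C d m1 = Xpow C d m2.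
Proof.
move=> /eqP m1_eq_m2; apply/matrixP => r s; rewrite !mxE.
by rewrite -modzDmr m1_eq_m2 modzDmr.
Qed.

Lemma sum_expect_Dop (psi : nat -> C) m j : (d%:Z %| m + 2 * j)%Z ->
  \sum_(1 <= k < d) expect psi (Dop C d m k%:Z)
    = d%:R * ((psi (modd (- j)))^* * psi (modd j)) - expect psi (Xpow C d m).
Proof.
move=> dvd_m2j; rewrite /expect.
have reorder (a b c e f : C) : a * (b * (c * e)) * f = a * c * f * (b * e) by ring.
have expand (G i : C) : G * (i * d%:R - 1) = d%:R * (i * G) - G by ring.
under eq_bigr => k _ do under eq_bigr => r _ do under eq_bigr => s _ do
  rewrite Dop_entry reorder.
rewrite exchange_big; under eq_bigr => r _ do rewrite exchange_big.
under eq_bigr => r _ do under eq_bigr => s _ do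
  rewrite -mulr_sumr (sum_tau_omega _ dvd_m2j) expand.
under eq_bigr => r _ do rewrite sumrB -mulr_sumr sum_eqz_mod.
rewrite sumrB -mulr_sumr; congr (_ * _ - _).
have col_j : ((modd j)%:Z + m == - j %[mod d%:Z])%Z.
  rewrite -modz_absz [X in X == _]modzDml eqz_mod_dvd.
  by have -> : j + m - - j = m + 2 * j by ring.
under eq_bigr => r _ do rewrite mxE /= (eqP col_j) mulrAC mulrC.
by rewrite sum_eqz_mod.
Qed.

Lemma exists_half_modz m : exists j, (d%:Z %| m + 2 * j)%Z.
Proof.
exists (- ((uphalf d)%:Z * m)); rewrite mulrN mulrA double_uphalfz.
have -> : m - (d%:Z + 1) * m = - (d%:Z * m) by ring.
by rewrite rpredN dvdz_mulr.
Qed.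

Lemma modd_gt0 j : ~~ (d%:Z %| j)%Z -> (0 < modd j)%N.
Proof.
move=> j_ndvd; rewrite lt0n; apply: contraNneq j_ndvd => j_mod0.
by apply/dvdz_mod0P; rewrite modz_absz j_mod0.
Qed.

Lemma modd_opp j : ~~ (d%:Z %| j)%Z -> modd (- j) = (d - modd j)%N.
Proof.
move=> j_ndvd; have a_gt0 := modd_gt0 j_ndvd; have a_lt := modd_lt j.
apply/eqP; rewrite -eqz_nat -modz_absz -modzNm modz_absz -(modzDl _ d%:Z).
by rewrite modz_small; lia.
Qed.

End Displacement.

Lemma overlap_field_iff (F : fieldType) (s D K x E : F) :
  s ^+ 2 = D + 1 -> K * (D + 1 + s) = 1 -> s != 1 ->
  (s * E = x <-> D * - (K * x) - E = - s * E).
Proof.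
move=> s2 hK s_neq1; rewrite -s2 in hK.
have key : D * - (K * x) - E - - s * E = (s - 1) * (K * (s + 1)) * (s * E - x).
  have -> : D = s ^+ 2 - 1 by rewrite s2 addrK.
  apply/eqP; rewrite -subr_eq0; apply/eqP.
  transitivity ((s - 1) * E * (1 - K * (s ^+ 2 + s))); first by ring.
  by rewrite hK subrr mulr0.
have Ks1_neq0 : K * (s + 1) != 0.
  apply/eqP => Ks1_eq0; move/eqP: hK.
  have -> : K * (s ^+ 2 + s) = K * (s + 1) * s by ring.
  by rewrite Ks1_eq0 mul0r eq_sym oner_eq0.
split=> [sEx|]; first by apply/eqP; rewrite -subr_eq0 key sEx subrr mulr0.
move/eqP; rewrite -subr_eq0 key 2!mulf_eq0 subr_eq0 (negbTE s_neq1) (negbTE Ks1_neq0).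
by rewrite subr_eq0 => /eqP.
Qed.

Section Overlap.
Variables (C : numClosedFieldType) (d : nat) (N sx0 : C) (v : nat -> C).
Hypothesis d_odd : odd d.
Hypothesis v_norm1 : forall j : nat, (0 < j < d)%N -> `|v j| = 1.
Hypothesis v_opp : forall j : nat, (0 < j < d)%N -> v (d - j)%N = - (v j)^*.
Hypothesis N_sqr : N ^+ 2 = (d.-1%:R - (- 2 - sqrtC (d.+1%:R : C)))^-1.

Local Notation psi := (Psi d N sx0 v).
Local Notation s := (sqrtC (d.+1%:R : C)).

Lemma Psi_small a : (0 < a < d)%N -> psi a = N * v a.
Proof.
by case/andP=> a_gt0 a_lt_d; rewrite /Psi modn_small // gtn_eqF.
Qed.

Lemma sqrt_succK : s ^+ 2 = d%:R + 1.
Proof. by rewrite sqrtCK -addn1 natrD. Qed.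

Lemma sqrt_succ_neq1 : s != 1.
Proof. by rewrite -[X in _ != X]sqrtC1 eqr_rootC // pnatr_eq1 eqSS -lt0n odd_gt0. Qed.

Lemma N_sqrE : N ^+ 2 = (d%:R + 1 + s)^-1.
Proof.
by rewrite N_sqr -subn1 natrB ?odd_gt0 //; congr _^-1; ring.
Qed.

Lemma succ_add_sqrt_gt0 : 0 < d%:R + 1 + s.
Proof. by rewrite ltr_wpDr ?sqrtC_ge0 ?ler0n // ltr_wpDl ?ler0n. Qed.

Lemma N_sqr_ge0 : 0 <= N ^+ 2.
Proof. by rewrite N_sqrE invr_ge0 ltW ?succ_add_sqrt_gt0. Qed.

Lemma N_sqr_mul : N ^+ 2 * (d%:R + 1 + s) = 1.
Proof. by rewrite N_sqrE mulVf // gt_eqF ?succ_add_sqrt_gt0. Qed.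

Lemma X_overlap_iff_sum_Dop j m : ~~ (d%:Z %| j)%Z -> (d%:Z %| m + 2 * j)%Z ->
  s * expect psi (Xpow C d m) = compZ d psi j ^+ 2 / `|compZ d psi j| ^+ 2
  <-> \sum_(1 <= k < d) expect psi (Dop C d m k%:Z) = - s * expect psi (Xpow C d m).
Proof.
move=> j_ndvd dvd_m2j.
rewrite (sum_expect_Dop d_odd _ dvd_m2j) (modd_opp d_odd j_ndvd) /compZ.
set a := `|(j %% d%:Z)%Z|%N.
have a_gt0 : (0 < a)%N := modd_gt0 d_odd j_ndvd.
have a_lt_d : (a < d)%N := modd_lt d_odd j.
rewrite !Psi_small ?a_gt0 //; last by lia.
rewrite v_opp ?a_gt0 //.
have normN : `|N| ^+ 2 = N ^+ 2 by rewrite -normrX ger0_norm ?N_sqr_ge0.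
have -> : (N * v a) ^+ 2 / `|N * v a| ^+ 2 = v a ^+ 2.
  rewrite normrM v_norm1 ?a_gt0 // mulr1 normN exprMn mulrAC divff ?mul1r //.
  by rewrite N_sqrE invr_eq0 gt_eqF ?succ_add_sqrt_gt0.
have -> : (N * - (v a)^*)^* * (N * v a) = - (N ^+ 2 * v a ^+ 2).
  rewrite rmorphM rmorphN /= conjCK -normN normCK; ring.
by apply: overlap_field_iff; rewrite ?sqrt_succK ?N_sqr_mul ?sqrt_succ_neq1.
Qed.

End Overlap.

Unset Implicit Arguments.
Theorem proposition1 (C : numClosedFieldType) (d : nat)
  (hd3 : (3 <= d)%N) (hdodd : odd d)
  (sx0 N : C) (v : nat -> C)
  (hsx0 : sx0 ^+ 2 = - 2 - sqrtC (d.+1%:R : C))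
  (hsx0im : 'Re sx0 = 0)
  (hv : forall j : nat, (0 < j < d)%N -> `|v j| = 1)
  (hvsym : forall j : nat, (0 < j < d)%N -> v (d - j)%N = - (v j)^*)
  (hN : N ^+ 2 = (d.-1%:R - (- 2 - sqrtC (d.+1%:R : C)))^-1) :
  let psi := Psi d N sx0 v in
  let s := sqrtC (d.+1%:R : C) in
  (forall j : int, ~~ (d%:Z %| j)%Z ->
     (s * expect psi (@Xpow C d (- (2 * j))) = compZ d psi j ^+ 2 / `|compZ d psi j| ^+ 2
      <-> \sum_(1 <= k < d) expect psi (@Dop C d (- (2 * j)) k%:Z)
          = - s * expect psi (@Xpow C d (- (2 * j)))))
  /\
  ((forall j : int, ~~ (d%:Z %| j)%Z ->
     s * expect psi (@Xpow C d (- (2 * j))) = compZ d psi j ^+ 2 / `|compZ d psi j| ^+ 2)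
   <->
   (forall j : int, ~~ (d%:Z %| j)%Z ->
     \sum_(1 <= k < d) expect psi (@Dop C d j k%:Z) = - s * expect psi (@Xpow C d j))).
Proof.
move=> psi s; have overlap := X_overlap_iff_sum_Dop sx0 hdodd hv hvsym hN.
have dvd_double_opp j : (d%:Z %| - (2 * j) + 2 * j)%Z by rewrite addNr dvdz0.
split=> [j j_ndvd|]; first exact: overlap.
split=> [overlap_all m m_ndvd|Dsum_all j j_ndvd].
  have [j dvd_m2j] := exists_half_modz hdodd m.
  have j_ndvd : ~~ (d%:Z %| j)%Z by rewrite -(dvdz_add_double hdodd dvd_m2j).
  apply/(overlap j m j_ndvd dvd_m2j).
  rewrite -(Xpow_eqmod C (m1 := - (2 * j))) ?overlap_all //.
  by rewrite eqz_mod_dvd -opprD addrC rpredN.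
apply/(overlap j _ j_ndvd (dvd_double_opp j))/Dsum_all.
by rewrite rpredN dvdz_double.
Qed.
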